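(* Let $\phi\in C^3((0,\infty))$, $\eta=\phi'$ and $\hat\eta(r)=\eta(r)+2\eta(2r)$, and suppose there are constants $0<a_0<\tilde r_1<\tilde r_2<2a_0$ and $a_1>a_0$ such that: $\eta'(r)>0$ for $0<r<\tilde r_1$ and $\eta'(r)<0$ for $r>\tilde r_1$; $\eta''(r)<0$ for $0<r<\tilde r_2$ and $\eta''(r)>0$ for $r>\tilde r_2$; $\hat\eta(r)<0$ for $0<r<a_0$ and $\hat\eta(r)>0$ for $r>a_0$; $\hat\eta'(r)>0$ for $0<r<a_1$ and $\hat\eta'(r)<0$ for $r>a_1$. Let $N,K$ be integers with $K\ge2$ and $K<N-1$. For $\mathbf r=(r_{-N},\dots,r_N)\in(0,\infty)^{2N+1}$ define: (i) $F^{QCF}_j(\mathbf r)$, $j=-N,\dots,N+1$: $F^{QCF}_{-N}=\eta(r_{-N})+2\eta(2r_{-N})$; $F^{QCF}_j=[\eta(r_j)+2\eta(2r_j)]-[\eta(r_{j-1})+2\eta(2r_{j-1})]$ for $-N+1\le j\le -K$ and $K+1\le j\le N$; $F^{QCF}_j=[\eta(r_j)+\eta(r_j+r_{j+1})]-[\eta(r_{j-1})+\eta(r_{j-1}+r_{j-2})]$ for $-K+1\le j\le K$; $F^{QCF}_{N+1}=-[\eta(r_N)+2\eta(2r_N)]$. (ii) $\psi^E_j(\mathbf r)$, $j=-N-1,\dots,N+1$: $\psi^E_{-N-1}=\psi^E_{N+1}=0$; $\psi^E_j=\eta(r_j)+2\eta(2r_j)$ for $-N\le j\le -K-2$ and $K+2\le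 j\le N$; $\psi^E_{-K-1}=\eta(r_{-K-1})+2\eta(2r_{-K-1})+\tfrac12\eta(r_{-K-1}+r_{-K})$; $\psi^E_{-K}=\eta(r_{-K})+\tfrac12\eta(r_{-K}+r_{-K-1})+\tfrac12\eta(r_{-K}+r_{-K+1})+\eta(2r_{-K})$; $\psi^E_{-K+1}=\eta(r_{-K+1})+\tfrac12\eta(r_{-K+1}+r_{-K})+\eta(r_{-K+1}+r_{-K+2})$; $\psi^E_j=\eta(r_j)+\eta(r_j+r_{j-1})+\eta(r_j+r_{j+1})$ for $-K+2\le j\le K-2$; $\psi^E_{K-1}=\eta(r_{K-1})+\eta(r_{K-1}+r_{K-2})+\tfrac12\eta(r_{K-1}+r_K)$; $\psi^E_K=\eta(r_K)+\tfrac12\eta(r_K+r_{K-1})+\tfrac12\eta(r_K+r_{K+1})+\eta(2r_K)$; $\psi^E_{K+1}=\eta(r_{K+1})+2\eta(2r_{K+1})+\tfrac12\eta(r_{K+1}+r_K)$. (iii) $F^{QCE}_j(\mathbf r)=\psi^E_j(\mathbf r)-\psi^E_{j-1}(\mathbf r)$ and $F^G_j(\mathbf r)=F^{QCF}_j(\mathbf r)-F^{QCE}_j(\mathbf r)$ for $j=-N,\dots,N+1$. Let $f_{-N},\dots,f_{N+1}\in\mathbb R$ be anti-symmetric, i.e. $f_{j+1}=-f_{-j}$ for $j=0,\dots,N$, and set $\Phi_j=-\sum_{i=-N}^{j}f_i$ for $j=-N,\dots,N$. Suppose $r_L,r_U$ satisfy $\tilde r_2/2<r_L<r_U$ and $\eta'(r_U)+13\eta'(2r_L)>0$,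 and $\eta(r_L)+4\eta(2r_L)-2\eta(2r_U)<\Phi_j<\eta(r_U)+4\eta(2r_U)-2\eta(2r_L)$ for $j=-N,\dots,N$. Then for every symmetric $\mathbf r^n\in\Omega=(r_L,r_U)^{2N+1}$ there is a unique symmetric $\mathbf r^{n+1}\in\Omega$ such that $F^{QCE}_j(\mathbf r^{n+1})+F^G_j(\mathbf r^n)+f_j=0$ for $j=-N,\dots,N+1$. The induced mapping $\mathbf r^n\mapsto\mathbf r^{n+1}$ is a contraction satisfying, for symmetric $\mathbf r^n,\mathbf s^n\in\Omega$ with images $\mathbf r^{n+1},\mathbf s^{n+1}$, $\|\mathbf r^{n+1}-\mathbf s^{n+1}\|_\infty\le\frac{8|\eta'(2r_L)|}{\eta'(r_U)-5|\eta'(2r_L)|}\|\mathbf r^n-\mathbf s^n\|_\infty$, where $\frac{8|\eta'(2r_L)|}{\eta'(r_U)-5|\eta'(2r_L)|}<1$; and the iterates $\mathbf r^n$ converge to the unique symmetric $\mathbf r\in\Omega$ satisfying the force-based quasicontinuum equations $F^{QCF}_j(\mathbf r)+f_j=0$, $j=-N,\dots,N+1$.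
   Context: A vector $\mathbf r$ is symmetric if $r_{-j}=r_j$ for $j=1,\dots,N$; $\|\mathbf r\|_\infty=\max_i|r_i|$. $F^{QCF}$, $F^{QCE}$ and $F^G$ are the force-based quasicontinuum forces, energy-based quasicontinuum forces and ghost-force corrections on the representative atoms of a one-dimensional chain with nearest and next-nearest neighbour pair interactions given by $\phi$, expressed in the lattice spacings $r_j$; $f_j$ are external forces. *)

From Stdlib Require Import Reals Lra Lia ZArith List Bool.
From Coquelicot Require Import Coquelicot.
Open Scope R_scope.

Definition zrange (a b : Z) : list Z :=
  map (fun k => (a + Z.of_nat k)%Z) (seq 0 (Z.to_nat (b - a + 1))).

Definition zsum (a b : Z) (g : Z -> R) : R :=
  fold_right Rplus 0 (map g (zrange a b)).

Definition norm_inf (N : Z) (v : Z -> R) : R :=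
  fold_right Rmax 0 (map (fun j => Rabs (v j)) (zrange (- N) N)).

Definition etahat (eta : R -> R) (r : R) : R := eta r + 2 * eta (2 * r).

Definition FQCF (eta : R -> R) (N K : Z) (r : Z -> R) (j : Z) : R :=
  if (j =? - N)%Z then etahat eta (r (- N)%Z)
  else if (j =? N + 1)%Z then - etahat eta (r N)
  else if (andb (- K + 1 <=? j) (j <=? K))%Z then
    (eta (r j) + eta (r j + r (j + 1)%Z))
    - (eta (r (j - 1)%Z) + eta (r (j - 1)%Z + r (j - 2)%Z))
  else etahat eta (r j) - etahat eta (r (j - 1)%Z).

Definition psiE (eta : R -> R) (N K : Z) (r : Z -> R) (j : Z) : R :=
  if (orb (j =? - N - 1) (j =? N + 1))%Z then 0
  else if (j =? - K - 1)%Z then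
    eta (r j) + 2 * eta (2 * r j) + / 2 * eta (r j + r (j + 1)%Z)
  else if (j =? - K)%Z then
    eta (r j) + / 2 * eta (r j + r (j - 1)%Z) + / 2 * eta (r j + r (j + 1)%Z)
    + eta (2 * r j)
  else if (j =? - K + 1)%Z then
    eta (r j) + / 2 * eta (r j + r (j - 1)%Z) + eta (r j + r (j + 1)%Z)
  else if (j =? K - 1)%Z then
    eta (r j) + eta (r j + r (j - 1)%Z) + / 2 * eta (r j + r (j + 1)%Z)
  else if (j =? K)%Z then
    eta (r j) + / 2 * eta (r j + r (j - 1)%Z) + / 2 * eta (r j + r (j + 1)%Z)
    + eta (2 * r j)
  else if (j =? K + 1)%Z then
    eta (r j) + 2 * eta (2 * r j) + / 2 * eta (r j + r (j - 1)%Z)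
  else if (andb (- K + 2 <=? j) (j <=? K - 2))%Z then
    eta (r j) + eta (r j + r (j - 1)%Z) + eta (r j + r (j + 1)%Z)
  else etahat eta (r j).

Definition FQCE (eta : R -> R) (N K : Z) (r : Z -> R) (j : Z) : R :=
  psiE eta N K r j - psiE eta N K r (j - 1)%Z.

Definition FG (eta : R -> R) (N K : Z) (r : Z -> R) (j : Z) : R :=
  FQCF eta N K r j - FQCE eta N K r j.

Definition symmetric (N : Z) (r : Z -> R) : Prop :=
  forall j : Z, (1 <= j <= N)%Z -> r (- j)%Z = r j.

Definition in_Omega (N : Z) (rL rU : R) (r : Z -> R) : Prop :=
  forall j : Z, (- N <= j <= N)%Z -> rL < r j < rU.

Definition gfc_step (eta : R -> R) (N K : Z) (f : Z -> R) (rn rn1 : Z -> R) : Prop :=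
  forall j : Z, (- N <= j <= N + 1)%Z ->
    FQCE eta N K rn1 j + FG eta N K rn j + f j = 0.

Definition qcf_eq (eta : R -> R) (N K : Z) (f : Z -> R) (r : Z -> R) : Prop :=
  forall j : Z, (- N <= j <= N + 1)%Z -> FQCF eta N K r j + f j = 0.

From Stdlib Require Import Reals Lra Lia ZArith List ClassicalEpsilon.
From Coquelicot Require Import Coquelicot.
Open Scope R_scope.

(* Summing the equations of one step from the left end turns them into psiE_j(r^{n+1}) =
   psiE_j(r^n) - sum_{i<=j} F^QCF_i(r^n) - sum_{i<=j} f_i; as psiE is the running sum of F^QCE,
   the right-hand side feels r^n only through the partial sums of the ghost forces. By symmetry
   only the equations j <= 0 matter, and there these partial sums involve just the three bonds
   at the interface -K. On Omega the nearest-neighbour term eta(r_j) of psiE_j has slope at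
   least eta'(r_U), while each second-neighbour term has slope at most |eta'(2 r_L)|, because
   eta'' changes sign at r2t < 2 r_L. Hence each equation can be solved for r_j (intermediate
   value theorem, using the bounds on Phi_j), a Jacobi sweep over the j's is a contraction, and
   (eta'(r_U) - 5|eta'(2 r_L)|) |r^{n+1} - s^{n+1}| <= 8 |eta'(2 r_L)| |r^n - s^n| in the sup
   norm. The QCF solution is the fixed point of the step map. *)

Lemma Z_interval_ind (a b : Z) (P : Z -> Prop) :
  P a -> (forall j, (a < j <= b)%Z -> P (j - 1)%Z -> P j) ->
  forall j, (a <= j <= b)%Z -> P j.
Proof.
  intros Ha Hstep.
  assert (Hnat : forall n, (a + Z.of_nat n <= b)%Z -> P (a + Z.of_nat n)%Z).
  { induction n as [|n IH]; intros Hn.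
    - now rewrite Z.add_0_r.
    - apply Hstep; [lia|].
      replace (a + Z.of_nat (S n) - 1)%Z with (a + Z.of_nat n)%Z by lia.
      apply IH; lia. }
  intros j Hj. replace j with (a + Z.of_nat (Z.to_nat (j - a)))%Z by lia.
  apply Hnat; lia.
Qed.

Lemma zsum_empty a b g : (b < a)%Z -> zsum a b g = 0.
Proof.
  intros H. unfold zsum, zrange.
  now replace (Z.to_nat (b - a + 1)) with 0%nat by lia.
Qed.

Lemma zsum_snoc a b g : (a <= b)%Z -> zsum a b g = zsum a (b - 1) g + g b.
Proof.
  intros H. unfold zsum, zrange.
  replace (Z.to_nat (b - a + 1)) with (S (Z.to_nat (b - 1 - a + 1))) by lia.
  rewrite seq_S, !map_app, fold_right_app. simpl.
  replace (a + Z.of_nat (Z.to_nat (b - 1 - a + 1)))%Z with b by lia.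
  induction (map _ _) as [|x l IH]; simpl; [ring | rewrite IH; ring].
Qed.

Lemma zsum_split a b c g : (a - 1 <= b <= c)%Z ->
  zsum a c g = zsum a b g + zsum (b + 1) c g.
Proof.
  intros [Hab Hbc].
  apply (Z_interval_ind b c (fun c => zsum a c g = zsum a b g + zsum (b + 1) c g));
    [| |lia].
  - rewrite (zsum_empty (b + 1) b) by lia. ring.
  - intros i Hi IH. rewrite (zsum_snoc a i), (zsum_snoc (b + 1) i), IH by lia. ring.
Qed.

Lemma zsum_cons a b g : (a <= b)%Z -> zsum a b g = g a + zsum (a + 1) b g.
Proof.
  intros H. rewrite (zsum_split a a b), zsum_snoc, zsum_empty by lia. ring.
Qed.

Lemma in_zrange a b x : In x (zrange a b) <-> (a <= x <= b)%Z.
Proof.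
  unfold zrange. rewrite in_map_iff. split.
  - intros [k [<- Hk]]. apply in_seq in Hk. lia.
  - intros H. exists (Z.to_nat (x - a)). split; [lia|]. apply in_seq. lia.
Qed.

Lemma fold_Rmax_ge (l : list R) x : In x l -> x <= fold_right Rmax 0 l.
Proof.
  induction l as [|y l IH]; simpl; [tauto|]. intros [->|Hx].
  - apply Rmax_l.
  - eapply Rle_trans; [apply IH, Hx | apply Rmax_r].
Qed.

Lemma fold_Rmax_le (l : list R) c :
  0 <= c -> (forall x, In x l -> x <= c) -> fold_right Rmax 0 l <= c.
Proof.
  intros Hc. induction l as [|y l IH]; simpl; intros H; [exact Hc|].
  apply Rmax_lub; [apply H | apply IH]; auto.
Qed.

Lemma fold_Rmax_ge0 (l : list R) : 0 <= fold_right Rmax 0 l.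
Proof.
  induction l as [|y l IH]; simpl; [lra|]. eapply Rle_trans; [exact IH | apply Rmax_r].
Qed.

Lemma fold_Rmax_attained (l : list R) :
  l <> nil -> (forall x, In x l -> 0 <= x) -> In (fold_right Rmax 0 l) l.
Proof.
  induction l as [|y [|z l] IH]; intros Hl Hpos; [easy| |].
  - simpl. rewrite Rmax_left by (apply Hpos; now left). now left.
  - change (In (Rmax y (fold_right Rmax 0 (z :: l))) (y :: z :: l)).
    apply Rmax_case; [now left|]. right. apply IH; [easy|]. intros x Hx. apply Hpos. now right.
Qed.

Definition dist_inf (N : Z) (x y : Z -> R) : R := norm_inf N (fun j => x j - y j).

Lemma dist_inf_ge0 N x y : 0 <= dist_inf N x y.
Proof. apply fold_Rmax_ge0. Qed.

Lemma dist_inf_coord N x y j : (- N <= j <= N)%Z -> Rabs (x j - y j) <= dist_inf N x y.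
Proof.
  intros Hj. apply fold_Rmax_ge, in_map_iff. exists j. split; [easy|]. now apply in_zrange.
Qed.

Lemma dist_inf_le N x y c : 0 <= c ->
  (forall j, (- N <= j <= N)%Z -> Rabs (x j - y j) <= c) -> dist_inf N x y <= c.
Proof.
  intros Hc H. apply fold_Rmax_le; [exact Hc|].
  intros z Hz. apply in_map_iff in Hz as [j [<- Hj]]. now apply H, in_zrange.
Qed.

Lemma dist_inf_attained N x y : (0 <= N)%Z ->
  exists j, (- N <= j <= N)%Z /\ dist_inf N x y = Rabs (x j - y j).
Proof.
  intros HN.
  assert (Hin : In (dist_inf N x y) (map (fun j => Rabs (x j - y j)) (zrange (- N) N))).
  { apply fold_Rmax_attained.
    - assert (H0 : In 0%Z (zrange (- N) N)) by (apply in_zrange; lia).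
      destruct (zrange (- N) N); [easy | discriminate].
    - intros z Hz. apply in_map_iff in Hz as [j [<- _]]. apply Rabs_pos. }
  apply in_map_iff in Hin as [j [Hj Hr]]. exists j. split; [now apply in_zrange | easy].
Qed.

Lemma dist_inf_refl N x : dist_inf N x x = 0.
Proof.
  apply Rle_antisym; [|apply dist_inf_ge0]. apply dist_inf_le; [lra|].
  intros j _. rewrite Rminus_diag, Rabs_R0. lra.
Qed.

Lemma dist_inf_le0 N x y : dist_inf N x y <= 0 -> forall j, (- N <= j <= N)%Z -> x j = y j.
Proof.
  intros H j Hj. pose proof (dist_inf_coord N x y j Hj). pose proof (Rabs_pos (x j - y j)).
  assert (Habs : Rabs (x j - y j) = 0) by lra. apply Rabs_eq_0 in Habs. lra.
Qed.

Lemma is_lim_seq_between (u : nat -> R) (l a b : R) :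
  is_lim_seq u l -> (forall n, a <= u n <= b) -> a <= l <= b.
Proof.
  intros Hu H. split.
  - apply (is_lim_seq_le (fun _ => a) u a l); [apply H | apply is_lim_seq_const | exact Hu].
  - apply (is_lim_seq_le u (fun _ => b) l b); [apply H | exact Hu | apply is_lim_seq_const].
Qed.

Lemma is_lim_seq_geometric (B c : R) : 0 <= c < 1 -> is_lim_seq (fun n => B * c ^ n) 0.
Proof.
  intros Hc. replace (Finite 0) with (Rbar_mult B 0) by (simpl; f_equal; ring).
  apply is_lim_seq_scal_l, is_lim_seq_geom. rewrite Rabs_pos_eq; lra.
Qed.

Lemma le_0_of_le_geometric (z B c : R) : 0 <= c < 1 -> (forall n, z <= B * c ^ n) -> z <= 0.
Proof.
  intros Hc H.
  exact (is_lim_seq_le (fun _ => z) _ z 0 H (is_lim_seq_const z) (is_lim_seq_geometric B c Hc)).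
Qed.

Lemma is_lim_seq_contracting (a : nat -> R) (c : R) : 0 <= c < 1 ->
  (forall n, 0 <= a n) -> (forall n, a (S n) <= c * a n) -> is_lim_seq a 0.
Proof.
  intros Hc Hpos Hstep.
  assert (Hgeom : forall n, a n <= a 0%nat * c ^ n).
  { induction n as [|n IH]; simpl; [lra|].
    specialize (Hstep n). apply (Rmult_le_compat_l c) in IH; lra. }
  apply (is_lim_seq_le_le (fun _ => 0) a (fun n => a 0%nat * c ^ n)).
  - intros n. split; [apply Hpos | apply Hgeom].
  - apply is_lim_seq_const.
  - now apply is_lim_seq_geometric.
Qed.

(** * Banach's fixed point theorem *)

Section Contraction.
Variables (N : Z) (P : (Z -> R) -> Prop) (T : (Z -> R) -> Z -> R) (c : R).
Hypothesis Hc : 0 <= c < 1.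
Hypothesis HPT : forall x, P x -> P (T x).
Hypothesis HT : forall x y, P x -> P y -> dist_inf N (T x) (T y) <= c * dist_inf N x y.
Hypothesis HPlim : forall (u : nat -> Z -> R) (l : Z -> R), (forall n, P (u n)) ->
  (forall j, (- N <= j <= N)%Z -> is_lim_seq (fun n => u n j) (l j)) -> P l.
Variable x0 : Z -> R.
Hypothesis HPx0 : P x0.

Let u n := Nat.iter n T x0.
Let D := dist_inf N (u 1%nat) x0.

Lemma iterate_in_P n : P (u n).
Proof. induction n; simpl; auto. Qed.

Lemma iterate_step n : dist_inf N (u (S n)) (u n) <= D * c ^ n.
Proof.
  induction n as [|n IH]; [rewrite pow_O, Rmult_1_r; apply Rle_refl|].
  change (dist_inf N (T (u (S n))) (T (u n)) <= D * (c * c ^ n)).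
  eapply Rle_trans; [apply HT; apply iterate_in_P|].
  apply (Rmult_le_compat_l c) in IH; lra.
Qed.

Lemma iterate_gap j n m : (- N <= j <= N)%Z -> (n <= m)%nat ->
  Rabs (u m j - u n j) <= D * c ^ n / (1 - c).
Proof.
  intros Hj Hnm.
  assert (Hgap : forall k, Rabs (u (n + k)%nat j - u n j) <= D * (c ^ n - c ^ (n + k)) / (1 - c)).
  { induction k as [|k IH].
    - rewrite Nat.add_0_r, Rminus_diag, Rabs_R0, Rminus_diag, Rmult_0_r. unfold Rdiv. lra.
    - rewrite Nat.add_succ_r.
      replace (u (S (n + k)) j - u n j)
        with ((u (S (n + k)) j - u (n + k)%nat j) + (u (n + k)%nat j - u n j)) by ring.
      eapply Rle_trans; [apply Rabs_triang|].
      pose proof (Rle_trans _ _ _ (dist_inf_coord N _ _ j Hj) (iterate_step (n + k))).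
      replace (D * (c ^ n - c ^ S (n + k)) / (1 - c))
        with (D * c ^ (n + k) + D * (c ^ n - c ^ (n + k)) / (1 - c)) by (simpl; field; lra).
      lra. }
  replace m with (n + (m - n))%nat by lia. eapply Rle_trans; [apply Hgap|].
  pose proof (pow_le c (n + (m - n)) (proj1 Hc)).
  assert (HD : 0 <= D) by apply dist_inf_ge0.
  unfold Rdiv. apply Rmult_le_compat_r; [apply Rlt_le, Rinv_0_lt_compat; lra|].
  nra.
Qed.

Lemma iterate_cauchy j : (- N <= j <= N)%Z -> ex_lim_seq_cauchy (fun n => u n j).
Proof.
  intros Hj eps.
  destruct (proj2 (is_lim_seq_spec _ _) (is_lim_seq_geometric (D / (1 - c)) c Hc) eps) as [M HM].
  exists M. intros n m Hn Hm.
  assert (Hsmall : forall p q, (M <= p <= q)%nat -> Rabs (u q j - u p j) < eps).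
  { intros p q Hpq. eapply Rle_lt_trans; [now apply iterate_gap|].
    specialize (HM p (proj1 Hpq)). rewrite Rminus_0_r in HM.
    eapply Rle_lt_trans; [|exact HM]. right.
    rewrite Rabs_pos_eq; [unfold Rdiv; ring|].
    assert (HD : 0 <= D) by apply dist_inf_ge0. pose proof (pow_le c p (proj1 Hc)).
    apply Rmult_le_pos; [|easy]. apply Rmult_le_pos; [easy|]. apply Rlt_le, Rinv_0_lt_compat; lra. }
  destruct (Nat.le_ge_cases n m).
  - rewrite Rabs_minus_sym. apply Hsmall. lia.
  - apply Hsmall. lia.
Qed.

Let l j := real (Lim_seq (fun n => u n j)).

Lemma iterate_lim j : (- N <= j <= N)%Z -> is_lim_seq (fun n => u n j) (l j).
Proof.
  intros Hj. destruct (proj2 (ex_lim_seq_cauchy_corr _) (iterate_cauchy j Hj)) as [l0 Hl0].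
  unfold l. now rewrite (is_lim_seq_unique _ _ Hl0).
Qed.

Lemma limit_gap j n : (- N <= j <= N)%Z -> Rabs (l j - u n j) <= D * c ^ n / (1 - c).
Proof.
  intros Hj. apply Rabs_le.
  assert (Hlim : is_lim_seq (fun m => u (m + n)%nat j) (l j)).
  { apply (is_lim_seq_incr_n (fun m => u m j)). now apply iterate_lim. }
  enough (u n j - D * c ^ n / (1 - c) <= l j <= u n j + D * c ^ n / (1 - c)) by lra.
  apply (is_lim_seq_between _ _ _ _ Hlim). intros m.
  pose proof (iterate_gap j n (m + n) Hj ltac:(lia)) as Hg. apply Rabs_le_between in Hg. lra.
Qed.

Theorem contraction_fixed_point : exists x, P x /\ forall j, (- N <= j <= N)%Z -> T x j = x j.
Proof.
  assert (HPl : P l) by (apply (HPlim u l iterate_in_P iterate_lim)).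
  exists l. split; [exact HPl|]. intros j Hj.
  assert (HD : 0 <= D) by apply dist_inf_ge0.
  assert (Hbound : forall n, Rabs (T l j - l j) <= 2 * D * c / (1 - c) * c ^ n).
  { intros n.
    replace (T l j - l j) with ((T l j - T (u n) j) + (u (S n) j - l j)) by (simpl; ring).
    eapply Rle_trans; [apply Rabs_triang|].
    assert (H1 : Rabs (T l j - T (u n) j) <= c * (D * c ^ n / (1 - c))).
    { eapply Rle_trans; [apply (dist_inf_coord N _ _ j Hj)|].
      eapply Rle_trans; [apply HT; [exact HPl | apply iterate_in_P]|].
      apply Rmult_le_compat_l; [lra|]. apply dist_inf_le.
      - apply Rmult_le_pos; [apply Rmult_le_pos; [easy | apply pow_le; lra]|].
        apply Rlt_le, Rinv_0_lt_compat; lra.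
      - intros i Hi. now apply limit_gap. }
    assert (H2 : Rabs (u (S n) j - l j) <= D * c ^ S n / (1 - c)).
    { rewrite Rabs_minus_sym. now apply limit_gap. }
    replace (2 * D * c / (1 - c) * c ^ n)
      with (c * (D * c ^ n / (1 - c)) + D * c ^ S n / (1 - c)) by (simpl; field; lra).
    lra. }
  assert (Hzero : Rabs (T l j - l j) <= 0).
  { exact (le_0_of_le_geometric _ _ c Hc Hbound). }
  pose proof (Rabs_pos (T l j - l j)).
  assert (Habs : Rabs (T l j - l j) = 0) by lra. apply Rabs_eq_0 in Habs. lra.
Qed.

End Contraction.

(** * Mean value estimates *)

Lemma sub_ge_of_derive_ge (f f' : R -> R) (m x y : R) : x <= y ->
  (forall c, x <= c <= y -> is_derive f c (f' c)) ->
  (forall c, x < c < y -> m <= f' c) -> m * (y - x) <= f y - f x.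
Proof.
  intros Hxy Hf Hm. destruct (Req_dec x y) as [<-|Hne]; [lra|].
  destruct (MVT_cor2 f f' x y) as [c [Hmvt Hc]]; [lra | intros; now apply is_derive_Reals, Hf|].
  rewrite Hmvt. apply Rmult_le_compat_r; [lra | now apply Hm].
Qed.

Lemma sub_le_of_derive_le (f f' : R -> R) (M x y : R) : x <= y ->
  (forall c, x <= c <= y -> is_derive f c (f' c)) ->
  (forall c, x < c < y -> f' c <= M) -> f y - f x <= M * (y - x).
Proof.
  intros Hxy Hf HM. destruct (Req_dec x y) as [<-|Hne]; [lra|].
  destruct (MVT_cor2 f f' x y) as [c [Hmvt Hc]]; [lra | intros; now apply is_derive_Reals, Hf|].
  rewrite Hmvt. apply Rmult_le_compat_r; [lra | now apply HM].
Qed.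

Lemma Rabs_sub_ge_of_derive_ge (f f' : R -> R) (m a b x y : R) : 0 <= m ->
  (forall c, a <= c <= b -> is_derive f c (f' c)) -> (forall c, a <= c <= b -> m <= f' c) ->
  a <= x <= b -> a <= y <= b -> m * Rabs (x - y) <= Rabs (f x - f y).
Proof.
  intros Hm Hf Hf'.
  assert (Hle : forall x y, a <= x <= y -> y <= b -> m * Rabs (y - x) <= Rabs (f y - f x)).
  { intros x' y' Hx Hy.
    assert (Hd : m * (y' - x') <= f y' - f x').
    { apply (sub_ge_of_derive_ge f f'); [lra | intros; apply Hf; lra | intros; apply Hf'; lra]. }
    rewrite !Rabs_pos_eq; nra. }
  intros Hx Hy. destruct (Rle_or_lt x y).
  - rewrite (Rabs_minus_sym x), (Rabs_minus_sym (f x)). apply Hle; lra.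
  - apply Hle; lra.
Qed.

Lemma Rabs_sub_le_of_derive_le (f f' : R -> R) (M a b x y : R) :
  (forall c, a <= c <= b -> is_derive f c (f' c)) -> (forall c, a <= c <= b -> Rabs (f' c) <= M) ->
  a <= x <= b -> a <= y <= b -> Rabs (f x - f y) <= M * Rabs (x - y).
Proof.
  intros Hf Hf'.
  assert (Hle : forall x y, a <= x <= y -> y <= b -> Rabs (f y - f x) <= M * Rabs (y - x)).
  { intros x' y' Hx Hy. rewrite (Rabs_pos_eq (y' - x')) by lra.
    assert (Hbounds : forall c, a <= c <= b -> - M <= f' c <= M)
      by (intros c Hc; now apply Rabs_le_between, Hf').
    assert (Hlow : - M * (y' - x') <= f y' - f x').
    { apply (sub_ge_of_derive_ge f f'); [lra | intros; apply Hf; lra | intros; apply Hbounds; lra]. }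
    assert (Hup : f y' - f x' <= M * (y' - x')).
    { apply (sub_le_of_derive_le f f'); [lra | intros; apply Hf; lra | intros; apply Hbounds; lra]. }
    apply Rabs_le. lra. }
  intros Hx Hy. destruct (Rle_or_lt x y).
  - rewrite (Rabs_minus_sym x), (Rabs_minus_sym (f x)). apply Hle; lra.
  - apply Hle; lra.
Qed.

Lemma Rabs_weighted_sum3 w1 w2 w3 x1 x2 x3 : 0 <= w1 -> 0 <= w2 -> 0 <= w3 ->
  Rabs (w1 * x1 + w2 * x2 + w3 * x3) <= w1 * Rabs x1 + w2 * Rabs x2 + w3 * Rabs x3.
Proof.
  intros H1 H2 H3.
  pose proof (Rabs_triang (w1 * x1 + w2 * x2) (w3 * x3)).
  pose proof (Rabs_triang (w1 * x1) (w2 * x2)).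
  rewrite !Rabs_mult, (Rabs_pos_eq w1), (Rabs_pos_eq w2), (Rabs_pos_eq w3) in * by easy. lra.
Qed.

Definition clamp (a b t : R) : R := Rmax a (Rmin b t).

Lemma clamp_in a b t : a <= b -> a <= clamp a b t <= b.
Proof. unfold clamp, Rmax, Rmin. repeat destruct Rle_dec; lra. Qed.

Lemma clamp_id a b t : a <= t <= b -> clamp a b t = t.
Proof. unfold clamp, Rmax, Rmin. repeat destruct Rle_dec; lra. Qed.

Lemma clamp_lip a b s t : Rabs (clamp a b s - clamp a b t) <= Rabs (s - t).
Proof. unfold clamp, Rmax, Rmin, Rabs. repeat destruct Rle_dec; repeat destruct Rcase_abs; lra. Qed.

Lemma symmetric_pred N r j : symmetric N r -> (1 <= j <= N)%Z -> r (- j + 1)%Z = r (j - 1)%Z.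
Proof.
  intros Hs Hj. destruct (Z.eq_dec j 1) as [->|Hne]; [reflexivity|].
  replace (- j + 1)%Z with (- (j - 1))%Z by ring. apply Hs. lia.
Qed.

Lemma symmetric_succ N r j : symmetric N r -> (1 <= j <= N - 1)%Z -> r (- j - 1)%Z = r (j + 1)%Z.
Proof. intros Hs Hj. replace (- j - 1)%Z with (- (j + 1))%Z by ring. apply Hs. lia. Qed.

Definition in_cl_Omega (N : Z) (a b : R) (x : Z -> R) : Prop :=
  forall j, (- N <= j <= N)%Z -> a <= x j <= b.

Lemma in_Omega_cl N a b x : in_Omega N a b x -> in_cl_Omega N a b x.
Proof. intros H j Hj. specialize (H j Hj). lra. Qed.

Lemma symmetric_in_cl_Omega_closed N a b (u : nat -> Z -> R) (l : Z -> R) :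
  (forall n, symmetric N (u n) /\ in_cl_Omega N a b (u n)) ->
  (forall j, (- N <= j <= N)%Z -> is_lim_seq (fun n => u n j) (l j)) ->
  symmetric N l /\ in_cl_Omega N a b l.
Proof.
  intros Hu Hl. split.
  - intros j Hj. apply Rbar_finite_eq.
    rewrite <- (is_lim_seq_unique _ _ (Hl j ltac:(lia))).
    rewrite <- (is_lim_seq_unique _ _ (Hl (- j)%Z ltac:(lia))).
    apply Lim_seq_ext. intros n. now apply (proj1 (Hu n)).
  - intros j Hj. apply (is_lim_seq_between _ _ _ _ (Hl j Hj)). intros n. now apply (proj2 (Hu n)).
Qed.

Lemma dist_inf_attained_left N x y : (0 <= N)%Z -> symmetric N x -> symmetric N y ->
  exists j, (- N <= j <= 0)%Z /\ dist_inf N x y = Rabs (x j - y j).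
Proof.
  intros HN Hx Hy. destruct (dist_inf_attained N x y HN) as [j [Hj Hmax]].
  destruct (Z_le_gt_dec j 0).
  - now exists j.
  - exists (- j)%Z. split; [lia|]. now rewrite (Hx j), (Hy j) by lia.
Qed.

(** * Cumulative forces *)

Ltac Zcases := repeat (match goal with
  | |- context [Z.eqb ?a ?b] => destruct (Z.eqb_spec a b)
  | |- context [Z.leb ?a ?b] => destruct (Z.leb_spec a b)
  end; cbv beta iota delta [orb andb]; try lia).

(* For j <= 0,
   psiE_j = eta(r_j) + wdbl eta(2 r_j) + wprev eta(r_j + r_{j-1}) + wnext eta(r_j + r_{j+1}). *)
Definition wdbl (K j : Z) : R :=
  if (j <=? - K - 1)%Z then 2 else if (j =? - K)%Z then 1 else 0.
Definition wprev (K j : Z) : R :=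
  if (j <=? - K - 1)%Z then 0 else if (j =? - K)%Z then / 2 else if (j =? - K + 1)%Z then / 2 else 1.
Definition wnext (K j : Z) : R :=
  if (j <=? - K - 2)%Z then 0 else if (j =? - K - 1)%Z then / 2 else if (j =? - K)%Z then / 2 else 1.

Definition psi_loc (eta : R -> R) (K j : Z) (u y v : R) : R :=
  eta y + wdbl K j * eta (2 * y) + wprev K j * eta (y + u) + wnext K j * eta (y + v).

(* For j <= 0, the partial sum of the ghost forces F^G_i(r) over i <= j (ghost_cum_spec). *)
Definition ghost_cum (eta : R -> R) (K j : Z) (r : Z -> R) : R :=
  (2 - wdbl K j) * eta (2 * r (- K)%Z) - wnext K j * eta (r (- K)%Z + r (- K - 1)%Z)
  - wprev K j * eta (r (- K)%Z + r (- K + 1)%Z).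

Lemma weights_bounds K j :
  0 <= wdbl K j <= 2 /\ 0 <= wprev K j <= 1 /\ 0 <= wnext K j <= 1 /\
  wdbl K j + wprev K j + wnext K j <= 5 / 2.
Proof. unfold wdbl, wprev, wnext. Zcases; lra. Qed.

Lemma wprev_outer K j : (j <= - K - 1)%Z -> wprev K j = 0.
Proof. intros Hj. unfold wprev. now Zcases. Qed.

Section Forces.
Variable eta : R -> R.
Variables N K : Z.
Hypothesis HK : (2 <= K)%Z.
Hypothesis HKN : (K < N - 1)%Z.

Lemma psiE_left r j : (- N <= j <= 0)%Z ->
  psiE eta N K r j = psi_loc eta K j (r (j - 1)%Z) (r j) (r (j + 1)%Z).
Proof. intros Hj. unfold psiE, psi_loc, etahat, wdbl, wprev, wnext. Zcases; ring. Qed.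

Lemma psiE_right r j : (1 <= j <= N)%Z ->
  psiE eta N K r j = psi_loc eta K (- j) (r (j + 1)%Z) (r j) (r (j - 1)%Z).
Proof. intros Hj. unfold psiE, psi_loc, etahat, wdbl, wprev, wnext. Zcases; ring. Qed.

Lemma psiE_boundary r j : (j = - N - 1 \/ j = N + 1)%Z -> psiE eta N K r j = 0.
Proof. intros Hj. unfold psiE. now Zcases. Qed.

Lemma psiE_ext x y : (forall j, (- N <= j <= N)%Z -> x j = y j) ->
  forall j, (- N - 1 <= j <= N + 1)%Z -> psiE eta N K x j = psiE eta N K y j.
Proof.
  intros Hxy j Hj. unfold psiE, etahat. Zcases;
    try rewrite (Hxy j) by lia; try rewrite (Hxy (j - 1)%Z) by lia;
    try rewrite (Hxy (j + 1)%Z) by lia; reflexivity.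
Qed.

Lemma psiE_sym r j : symmetric N r -> (1 <= j <= N)%Z -> psiE eta N K r j = psiE eta N K r (- j).
Proof.
  intros Hs Hj. rewrite psiE_right, psiE_left by lia.
  rewrite (Hs j), (symmetric_pred N r j) by (easy || lia).
  destruct (Z.eq_dec j N) as [->|Hne].
  - unfold psi_loc. rewrite wprev_outer by lia. ring.
  - now rewrite (symmetric_succ N r j) by (easy || lia).
Qed.

Definition FQCF_cum (r : Z -> R) (j : Z) : R := zsum (- N) j (FQCF eta N K r).

Definition interface_term (r : Z -> R) : R :=
  2 * eta (2 * r (- K)%Z) - eta (r (- K)%Z + r (- K - 1)%Z) - eta (r (- K)%Z + r (- K + 1)%Z).

Lemma FQCF_cum_left r j : (- N <= j <= - K)%Z -> FQCF_cum r j = etahat eta (r j).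
Proof.
  revert j. apply Z_interval_ind; unfold FQCF_cum.
  - rewrite zsum_snoc, zsum_empty by lia. unfold FQCF. Zcases. ring.
  - intros i Hi IH. rewrite zsum_snoc, IH by lia. unfold FQCF. Zcases. ring.
Qed.

Lemma FQCF_cum_mid r j : (- K <= j <= K)%Z ->
  FQCF_cum r j = eta (r j) + eta (r j + r (j + 1)%Z) + eta (r j + r (j - 1)%Z) + interface_term r.
Proof.
  revert j. apply Z_interval_ind.
  - rewrite FQCF_cum_left by lia. unfold etahat, interface_term. ring.
  - intros i Hi IH. unfold FQCF_cum in *. rewrite zsum_snoc, IH by lia. unfold FQCF. Zcases.
    replace (i - 1 + 1)%Z with i by ring. replace (i - 1 - 1)%Z with (i - 2)%Z by ring.
    rewrite (Rplus_comm (r (i - 1)%Z) (r (i - 2)%Z)), (Rplus_comm (r (i - 1)%Z) (r i)). ring.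
Qed.

Lemma FQCF_cum_right r j : (K <= j <= N)%Z ->
  FQCF_cum r j = FQCF_cum r K + etahat eta (r j) - etahat eta (r K).
Proof.
  revert j. apply Z_interval_ind; [ring|].
  intros i Hi IH. unfold FQCF_cum in *. rewrite zsum_snoc, IH by lia. unfold FQCF. Zcases. ring.
Qed.

Lemma FQCF_cum_end r : FQCF_cum r (N + 1) = FQCF_cum r N - etahat eta (r N).
Proof.
  unfold FQCF_cum. rewrite zsum_snoc by lia. replace (N + 1 - 1)%Z with N by ring.
  unfold FQCF at 2. Zcases. ring.
Qed.

Lemma ghost_cum_spec r j : (- N <= j <= 0)%Z ->
  FQCF_cum r j - psiE eta N K r j = ghost_cum eta K j r.
Proof.
  intros Hj. rewrite psiE_left by lia.
  destruct (Z_le_gt_dec j (- K)); [rewrite FQCF_cum_left | rewrite FQCF_cum_mid]; try lia;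
    unfold psi_loc, ghost_cum, interface_term, etahat, wdbl, wprev, wnext; Zcases; subst;
    try replace (- K - 1 + 1)%Z with (- K)%Z by ring;
    try replace (- K + 1 - 1)%Z with (- K)%Z by ring;
    rewrite ?(Rplus_comm (r (- K - 1)%Z) (r (- K)%Z)), ?(Rplus_comm (r (- K + 1)%Z) (r (- K)%Z));
    ring.
Qed.

Lemma FQCF_cum_at_K r : symmetric N r -> FQCF_cum r K = etahat eta (r K).
Proof.
  intros Hs. rewrite FQCF_cum_mid by lia. unfold interface_term, etahat.
  rewrite (Hs K), (symmetric_pred N r K), (symmetric_succ N r K) by (easy || lia).
  ring.
Qed.

Lemma FQCF_cum_total r : symmetric N r -> FQCF_cum r (N + 1) = 0.
Proof. intros Hs. rewrite FQCF_cum_end, FQCF_cum_right, FQCF_cum_at_K by (easy || lia). ring. Qed.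

Lemma FQCF_cum_sym r j : symmetric N r -> (1 <= j <= N)%Z -> FQCF_cum r j = FQCF_cum r (- j).
Proof.
  intros Hs Hj. destruct (Z_le_gt_dec j K).
  - rewrite !FQCF_cum_mid by lia.
    rewrite (Hs j), (symmetric_pred N r j), (symmetric_succ N r j) by (easy || lia).
    ring.
  - rewrite FQCF_cum_right, FQCF_cum_at_K, FQCF_cum_left, (Hs j) by (easy || lia). ring.
Qed.

End Forces.

Section AntisymmetricLoad.
Variables (N : Z) (f : Z -> R).
Hypothesis HN : (0 <= N)%Z.
Hypothesis Hf : forall j : Z, (0 <= j <= N)%Z -> f (j + 1)%Z = - f (- j)%Z.

Lemma zsum_antisym_centered k : (0 <= k <= N + 1)%Z -> zsum (- k + 1) k f = 0.
Proof.
  revert k. apply Z_interval_ind; [apply zsum_empty; lia|].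
  intros k Hk IH.
  assert (Hfk : f k = - f (- k + 1)%Z).
  { replace k with (k - 1 + 1)%Z at 1 by ring. rewrite Hf by lia. do 2 f_equal. ring. }
  rewrite zsum_cons, zsum_snoc by lia. replace (- k + 1 + 1)%Z with (- (k - 1) + 1)%Z by ring.
  rewrite IH, Hfk. ring.
Qed.

Lemma zsum_antisym_total : zsum (- N) (N + 1) f = 0.
Proof.
  rewrite (zsum_split (- N) (- (N + 1)) (N + 1)), zsum_empty, zsum_antisym_centered by lia. ring.
Qed.

Lemma zsum_antisym_sym j : (1 <= j <= N)%Z -> zsum (- N) j f = zsum (- N) (- j) f.
Proof. intros Hj. rewrite (zsum_split (- N) (- j) j), zsum_antisym_centered by lia. ring. Qed.

End AntisymmetricLoad.

Section StepEquations.
Variable eta : R -> R.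
Variables N K : Z.
Hypothesis HK : (2 <= K)%Z.
Hypothesis HKN : (K < N - 1)%Z.
Variable f : Z -> R.
Hypothesis Hf : forall j : Z, (0 <= j <= N)%Z -> f (j + 1)%Z = - f (- j)%Z.

Definition step_rhs (rn : Z -> R) (j : Z) : R :=
  psiE eta N K rn j - FQCF_cum eta N K rn j - zsum (- N) j f.

Lemma step_rhs_left rn j : (- N <= j <= 0)%Z ->
  step_rhs rn j = - ghost_cum eta K j rn - zsum (- N) j f.
Proof. intros Hj. unfold step_rhs. rewrite <- (ghost_cum_spec eta N K) by lia. ring. Qed.

Lemma step_rhs_sym rn j : symmetric N rn -> (1 <= j <= N)%Z -> step_rhs rn j = step_rhs rn (- j).
Proof.
  intros Hs Hj. unfold step_rhs.
  rewrite psiE_sym, FQCF_cum_sym, zsum_antisym_sym by (easy || lia). ring.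
Qed.

Lemma step_rhs_last rn : symmetric N rn -> step_rhs rn (N + 1) = 0.
Proof.
  intros Hs. unfold step_rhs.
  rewrite psiE_boundary, FQCF_cum_total, zsum_antisym_total by (easy || lia). ring.
Qed.

Lemma gfc_step_iff_cum rn x : gfc_step eta N K f rn x <->
  forall j, (- N - 1 <= j <= N + 1)%Z -> psiE eta N K x j = step_rhs rn j.
Proof.
  assert (Hfirst : psiE eta N K x (- N - 1) = step_rhs rn (- N - 1)).
  { unfold step_rhs, FQCF_cum. rewrite !psiE_boundary, !zsum_empty by lia. ring. }
  assert (Hrec : forall j, (- N <= j <= N + 1)%Z ->
    step_rhs rn j = step_rhs rn (j - 1) + (psiE eta N K rn j - psiE eta N K rn (j - 1))
                    - FQCF eta N K rn j - f j).
  { intros j Hj. unfold step_rhs, FQCF_cum. rewrite !(zsum_snoc (- N) j) by lia. ring. }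
  unfold gfc_step, FG, FQCE. split.
  - intros Hstep. apply Z_interval_ind; [exact Hfirst|].
    intros j Hj IH. specialize (Hstep j ltac:(lia)). rewrite Hrec by lia. lra.
  - intros Hcum j Hj. rewrite (Hcum j), (Hcum (j - 1)%Z), (Hrec j) by lia. ring.
Qed.

Lemma gfc_step_of_left_half rn x : symmetric N rn -> symmetric N x ->
  (forall j, (- N <= j <= 0)%Z -> psiE eta N K x j = step_rhs rn j) -> gfc_step eta N K f rn x.
Proof.
  intros Hsr Hsx Hleft. apply gfc_step_iff_cum. intros j Hj.
  destruct (Z_le_gt_dec j 0) as [Hle|Hgt].
  - destruct (Z.eq_dec j (- N - 1)) as [->|Hne]; [|apply Hleft; lia].
    unfold step_rhs, FQCF_cum. rewrite !psiE_boundary, zsum_empty, zsum_empty by lia. ring.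
  - destruct (Z.eq_dec j (N + 1)) as [->|Hne].
    + now rewrite psiE_boundary, step_rhs_last by (easy || lia).
    + rewrite psiE_sym, step_rhs_sym by (easy || lia). apply Hleft. lia.
Qed.

Lemma gfc_step_left_half rn x : gfc_step eta N K f rn x ->
  forall j, (- N <= j <= 0)%Z -> psiE eta N K x j = step_rhs rn j.
Proof. intros Hstep j Hj. apply gfc_step_iff_cum; [exact Hstep | lia]. Qed.

Lemma gfc_step_ext rn x y : (forall j, (- N <= j <= N)%Z -> x j = y j) ->
  gfc_step eta N K f rn x -> gfc_step eta N K f rn y.
Proof.
  intros Hxy Hx. apply gfc_step_iff_cum. intros j Hj.
  rewrite <- (psiE_ext eta N K HK HKN x y Hxy j Hj). now apply gfc_step_iff_cum.
Qed.

Lemma qcf_eq_iff_gfc_fixed r : qcf_eq eta N K f r <-> gfc_step eta N K f r r.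
Proof. unfold qcf_eq, gfc_step, FG. split; intros H j Hj; specialize (H j Hj); lra. Qed.

End StepEquations.
(** * Estimates on Omega *)

Section Regime.
Variables (eta eta1 eta2 : R -> R).
Hypothesis Heta : forall r, 0 < r -> is_derive eta r (eta1 r).
Hypothesis Heta1 : forall r, 0 < r -> is_derive eta1 r (eta2 r).
Variables (r1t r2t rL rU : R).
Hypothesis Hr1 : 0 < r1t.
Hypothesis Hr12 : r1t < r2t.
Hypothesis H1b : forall r, r > r1t -> eta1 r < 0.
Hypothesis H2a : forall r, 0 < r < r2t -> eta2 r < 0.
Hypothesis H2b : forall r, r > r2t -> eta2 r > 0.
Hypothesis HrL : r2t / 2 < rL.
Hypothesis HrLU : rL < rU.
Hypothesis Hder : eta1 rU + 13 * eta1 (2 * rL) > 0.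

Local Notation d := (eta1 rU).
Local Notation e := (- eta1 (2 * rL)).

Lemma e_pos : 0 < e.
Proof. enough (eta1 (2 * rL) < 0) by lra. apply H1b. lra. Qed.

Lemma d_gt_13e : 13 * e < d.
Proof. lra. Qed.

Lemma rU_le_r2t : rU <= r2t.
Proof.
  destruct (Rle_or_lt rU r2t) as [|Hlt]; [easy|].
  pose proof e_pos. enough (eta1 rU < 0) by lra. apply H1b. lra.
Qed.

Lemma eta1_ge_near t : rL <= t <= rU -> d <= eta1 t.
Proof.
  intros Ht. pose proof rU_le_r2t.
  enough (eta1 rU - eta1 t <= 0 * (rU - t)) by lra.
  apply (sub_le_of_derive_le eta1 eta2); [lra | intros; apply Heta1; lra |].
  intros c Hc. apply Rlt_le, H2a. lra.
Qed.

Lemma eta1_bounds_far t : 2 * rL <= t <= 2 * rU -> - e <= eta1 t <= 0.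
Proof.
  intros Ht. split.
  - enough (0 * (t - 2 * rL) <= eta1 t - eta1 (2 * rL)) by lra.
    apply (sub_ge_of_derive_ge eta1 eta2); [lra | intros; apply Heta1; lra |].
    intros c Hc. apply Rlt_le, H2b. lra.
  - apply Rlt_le, H1b. lra.
Qed.

Lemma eta_sep_near a b : rL <= a <= rU -> rL <= b <= rU ->
  d * Rabs (a - b) <= Rabs (eta a - eta b).
Proof.
  apply (Rabs_sub_ge_of_derive_ge eta eta1 d rL rU).
  - pose proof e_pos. lra.
  - intros c Hc. apply Heta. lra.
  - exact eta1_ge_near.
Qed.

Lemma eta_lip_far a b : 2 * rL <= a <= 2 * rU -> 2 * rL <= b <= 2 * rU ->
  Rabs (eta a - eta b) <= e * Rabs (a - b).
Proof.
  apply (Rabs_sub_le_of_derive_le eta eta1 e (2 * rL) (2 * rU)).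
  - intros c Hc. apply Heta. lra.
  - intros c Hc. apply Rabs_le. pose proof (eta1_bounds_far c Hc). lra.
Qed.

Lemma eta_antitone_far a b : 2 * rL <= a <= b -> b <= 2 * rU -> eta b <= eta a.
Proof.
  intros Ha Hb. enough (eta b - eta a <= 0 * (b - a)) by lra.
  apply (sub_le_of_derive_le eta eta1); [lra | intros; apply Heta; lra |].
  intros c Hc. apply eta1_bounds_far. lra.
Qed.

Lemma eta_pair_bounds a b : rL <= a <= rU -> rL <= b <= rU ->
  eta (2 * rU) <= eta (a + b) <= eta (2 * rL).
Proof. intros. split; apply eta_antitone_far; lra. Qed.

Lemma eta_pair_lip a b a' b' : rL <= a <= rU -> rL <= b <= rU -> rL <= a' <= rU -> rL <= b' <= rU ->
  Rabs (eta (a + b) - eta (a' + b')) <= e * (Rabs (a - a') + Rabs (b - b')).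
Proof.
  intros. eapply Rle_trans; [apply eta_lip_far; lra|].
  apply Rmult_le_compat_l; [pose proof e_pos; lra|].
  replace (a + b - (a' + b')) with ((a - a') + (b - b')) by ring. apply Rabs_triang.
Qed.

Lemma psi_loc_sep K j u y v u' y' v' :
  rL <= u <= rU -> rL <= y <= rU -> rL <= v <= rU ->
  rL <= u' <= rU -> rL <= y' <= rU -> rL <= v' <= rU ->
  (d - 2 * e * wdbl K j - e * (wprev K j + wnext K j)) * Rabs (y - y') <=
  Rabs (psi_loc eta K j u y v - psi_loc eta K j u' y' v')
  + e * (wprev K j * Rabs (u - u') + wnext K j * Rabs (v - v')).
Proof.
  intros Hu Hy Hv Hu' Hy' Hv'.
  pose proof (weights_bounds K j) as (Hwd & Hwp & Hwn & _).
  pose proof (eta_sep_near y y' Hy Hy') as Hsep.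
  pose proof (eta_pair_lip y y y' y' Hy Hy Hy' Hy') as Hdbl.
  replace (y + y) with (2 * y) in Hdbl by ring. replace (y' + y') with (2 * y') in Hdbl by ring.
  pose proof (eta_pair_lip y u y' u' Hy Hu Hy' Hu') as Hprev.
  pose proof (eta_pair_lip y v y' v' Hy Hv Hy' Hv') as Hnext.
  pose proof (Rabs_weighted_sum3 (wdbl K j) (wprev K j) (wnext K j)
    (eta (2 * y) - eta (2 * y')) (eta (y + u) - eta (y' + u')) (eta (y + v) - eta (y' + v'))
    ltac:(lra) ltac:(lra) ltac:(lra)) as Hw.
  set (S := wdbl K j * (eta (2 * y) - eta (2 * y')) + wprev K j * (eta (y + u) - eta (y' + u'))
            + wnext K j * (eta (y + v) - eta (y' + v'))) in Hw.
  assert (Htri : Rabs (eta y - eta y')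
                 <= Rabs (psi_loc eta K j u y v - psi_loc eta K j u' y' v') + Rabs S).
  { replace (eta y - eta y') with ((psi_loc eta K j u y v - psi_loc eta K j u' y' v') + - S)
      by (unfold S, psi_loc; ring).
    rewrite <- (Rabs_Ropp S). apply Rabs_triang. }
  apply (Rmult_le_compat_l (wdbl K j)) in Hdbl; [|lra].
  apply (Rmult_le_compat_l (wprev K j)) in Hprev; [|lra].
  apply (Rmult_le_compat_l (wnext K j)) in Hnext; [|lra].
  lra.
Qed.

Section Chain.
Variables N K : Z.
Hypothesis HK : (2 <= K)%Z.
Hypothesis HKN : (K < N - 1)%Z.
Variable f : Z -> R.
Hypothesis Hf : forall j : Z, (0 <= j <= N)%Z -> f (j + 1)%Z = - f (- j)%Z.
Hypothesis HPhi : forall j : Z, (- N <= j <= N)%Z ->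
  eta rL + 4 * eta (2 * rL) - 2 * eta (2 * rU) < - zsum (- N) j f /\
  - zsum (- N) j f < eta rU + 4 * eta (2 * rU) - 2 * eta (2 * rL).

Local Notation in_cl := (in_cl_Omega N rL rU).

Let clamp_in_Omega t : rL <= clamp rL rU t <= rU.
Proof. apply clamp_in. lra. Qed.

Lemma ghost_cum_lip rn sn j : in_cl rn -> in_cl sn ->
  Rabs (ghost_cum eta K j rn - ghost_cum eta K j sn) <= 8 * e * dist_inf N rn sn.
Proof.
  intros Hr Hs. pose proof e_pos. pose proof (dist_inf_ge0 N rn sn).
  pose proof (weights_bounds K j) as (Hwd & Hwp & Hwn & _).
  assert (Hpair : forall i i', (- N <= i <= N)%Z -> (- N <= i' <= N)%Z ->
    Rabs (eta (sn i + sn i') - eta (rn i + rn i')) <= 2 * e * dist_inf N rn sn).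
  { intros i i' Hi Hi'. rewrite Rabs_minus_sym. eapply Rle_trans; [apply eta_pair_lip; auto|].
    pose proof (dist_inf_coord N rn sn i Hi). pose proof (dist_inf_coord N rn sn i' Hi'). nra. }
  pose proof (Hpair (- K)%Z (- K)%Z ltac:(lia) ltac:(lia)) as Hdbl.
  rewrite Rabs_minus_sym in Hdbl.
  replace (rn (- K)%Z + rn (- K)%Z) with (2 * rn (- K)%Z) in Hdbl by ring.
  replace (sn (- K)%Z + sn (- K)%Z) with (2 * sn (- K)%Z) in Hdbl by ring.
  pose proof (Hpair (- K)%Z (- K - 1)%Z ltac:(lia) ltac:(lia)) as Hprev.
  pose proof (Hpair (- K)%Z (- K + 1)%Z ltac:(lia) ltac:(lia)) as Hnext.
  replace (ghost_cum eta K j rn - ghost_cum eta K j sn)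
    with ((2 - wdbl K j) * (eta (2 * rn (- K)%Z) - eta (2 * sn (- K)%Z))
          + wnext K j * (eta (sn (- K)%Z + sn (- K - 1)%Z) - eta (rn (- K)%Z + rn (- K - 1)%Z))
          + wprev K j * (eta (sn (- K)%Z + sn (- K + 1)%Z) - eta (rn (- K)%Z + rn (- K + 1)%Z)))
    by (unfold ghost_cum; ring).
  eapply Rle_trans; [apply Rabs_weighted_sum3; lra|].
  apply (Rmult_le_compat_l (2 - wdbl K j)) in Hdbl; [|lra].
  apply (Rmult_le_compat_l (wnext K j)) in Hprev; [|lra].
  apply (Rmult_le_compat_l (wprev K j)) in Hnext; [|lra].
  assert (0 <= (wdbl K j + (1 - wprev K j) + (1 - wnext K j)) * (e * dist_inf N rn sn))
    by (apply Rmult_le_pos; nra).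
  lra.
Qed.

Lemma step_rhs_between rn j u v : in_cl rn -> (- N <= j <= 0)%Z ->
  rL <= u <= rU -> rL <= v <= rU ->
  psi_loc eta K j u rL v < step_rhs eta N K f rn j < psi_loc eta K j u rU v.
Proof.
  intros Hr Hj Hu Hv. rewrite step_rhs_left by lia.
  pose proof (HPhi j ltac:(lia)) as HP.
  pose proof (weights_bounds K j) as (Hwd & Hwp & Hwn & _).
  assert (HL : rL <= rL <= rU) by lra. assert (HU : rL <= rU <= rU) by lra.
  assert (Hm : eta (2 * rU) <= eta (2 * rL)) by (apply eta_antitone_far; lra).
  assert (Hpair : forall i, (- K - 1 <= i <= - K + 1)%Z ->
    eta (2 * rU) <= eta (rn (- K)%Z + rn i) <= eta (2 * rL)).
  { intros i Hi. apply eta_pair_bounds; apply Hr; lia. }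
  pose proof (Hpair (- K)%Z ltac:(lia)) as B1.
  replace (rn (- K)%Z + rn (- K)%Z) with (2 * rn (- K)%Z) in B1 by ring.
  pose proof (Hpair (- K - 1)%Z ltac:(lia)) as B2. pose proof (Hpair (- K + 1)%Z ltac:(lia)) as B3.
  pose proof (eta_pair_bounds rL u HL Hu) as B4. pose proof (eta_pair_bounds rL v HL Hv) as B5.
  pose proof (eta_pair_bounds rU u HU Hu) as B6. pose proof (eta_pair_bounds rU v HU Hv) as B7.
  unfold psi_loc, ghost_cum. split; nra.
Qed.

Lemma psiE_left_clamped x j : in_cl x -> (- N <= j <= 0)%Z ->
  psiE eta N K x j = psi_loc eta K j (clamp rL rU (x (j - 1)%Z)) (x j) (clamp rL rU (x (j + 1)%Z)).
Proof.
  intros Hx Hj. rewrite psiE_left, (clamp_id _ _ (x (j + 1)%Z)) by (try apply Hx; lia).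
  destruct (Z_le_gt_dec j (- K - 1)).
  - (* x (j - 1) may lie outside the chain (j = -N), but its weight vanishes *)
    unfold psi_loc. rewrite wprev_outer by lia. ring.
  - now rewrite (clamp_id _ _ (x (j - 1)%Z)) by (apply Hx; lia).
Qed.

Lemma clamped_neighbours_dist x y j : (- N <= j <= 0)%Z ->
  wprev K j * Rabs (clamp rL rU (x (j - 1)%Z) - clamp rL rU (y (j - 1)%Z))
  + wnext K j * Rabs (clamp rL rU (x (j + 1)%Z) - clamp rL rU (y (j + 1)%Z))
  <= (wprev K j + wnext K j) * dist_inf N x y.
Proof.
  intros Hj. pose proof (weights_bounds K j) as (_ & Hwp & Hwn & _).
  assert (Hnext : wnext K j * Rabs (clamp rL rU (x (j + 1)%Z) - clamp rL rU (y (j + 1)%Z))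
                  <= wnext K j * dist_inf N x y).
  { apply Rmult_le_compat_l; [lra|].
    eapply Rle_trans; [apply clamp_lip | apply dist_inf_coord; lia]. }
  assert (Hprev : wprev K j * Rabs (clamp rL rU (x (j - 1)%Z) - clamp rL rU (y (j - 1)%Z))
                  <= wprev K j * dist_inf N x y).
  { destruct (Z_le_gt_dec j (- K - 1)).
    - rewrite wprev_outer by lia. lra.
    - apply Rmult_le_compat_l; [lra|].
      eapply Rle_trans; [apply clamp_lip | apply dist_inf_coord; lia]. }
  lra.
Qed.

Lemma gfc_step_sep rn sn x y : in_cl rn -> in_cl sn ->
  symmetric N x -> in_cl x -> symmetric N y -> in_cl y ->
  gfc_step eta N K f rn x -> gfc_step eta N K f sn y ->
  (d - 5 * e) * dist_inf N x y <= 8 * e * dist_inf N rn sn.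
Proof.
  intros Hr Hs Hsx Hx Hsy Hy Hstx Hsty. pose proof e_pos.
  destruct (dist_inf_attained_left N x y ltac:(lia) Hsx Hsy) as [j [Hj Hmax]].
  assert (Hdiff : psiE eta N K x j - psiE eta N K y j
                  = ghost_cum eta K j sn - ghost_cum eta K j rn).
  { rewrite (gfc_step_left_half eta N K HK HKN f rn x Hstx j Hj),
      (gfc_step_left_half eta N K HK HKN f sn y Hsty j Hj), !step_rhs_left by lia. ring. }
  rewrite !psiE_left_clamped in Hdiff by easy.
  pose proof (psi_loc_sep K j (clamp rL rU (x (j - 1)%Z)) (x j) (clamp rL rU (x (j + 1)%Z))
    (clamp rL rU (y (j - 1)%Z)) (y j) (clamp rL rU (y (j + 1)%Z))
    (clamp_in_Omega _) (Hx j ltac:(lia)) (clamp_in_Omega _)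
    (clamp_in_Omega _) (Hy j ltac:(lia)) (clamp_in_Omega _)) as Hsep.
  rewrite Hdiff, <- Hmax, Rabs_minus_sym in Hsep.
  pose proof (ghost_cum_lip rn sn j Hr Hs) as Hghost.
  pose proof (clamped_neighbours_dist x y j Hj) as Hnb.
  apply (Rmult_le_compat_l e) in Hnb; [|lra].
  pose proof (weights_bounds K j) as (_ & _ & _ & Hsum).
  pose proof (dist_inf_ge0 N x y).
  assert (0 <= (5 / 2 - (wdbl K j + wprev K j + wnext K j)) * (e * dist_inf N x y))
    by (apply Rmult_le_pos; nra).
  lra.
Qed.

Lemma psi_loc_continuous j u v y : rL <= u -> rL <= v -> rL <= y ->
  continuity_pt (fun s => psi_loc eta K j u s v) y.
Proof.
  intros Hu Hv Hy. pose proof (Rlt_trans 0 (r2t / 2) rL ltac:(lra) HrL).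
  apply continuity_pt_filterlim.
  apply (@ex_derive_continuous R_AbsRing R_NormedModule (fun s => psi_loc eta K j u s v)).
  unfold psi_loc. auto_derive. repeat split; eexists; apply Heta; lra.
Qed.

Lemma local_solution rn j u v : in_cl rn -> (- N <= j <= 0)%Z ->
  rL <= u <= rU -> rL <= v <= rU ->
  exists y, rL < y < rU /\ psi_loc eta K j u y v = step_rhs eta N K f rn j.
Proof.
  intros Hr Hj Hu Hv. destruct (step_rhs_between rn j u v Hr Hj Hu Hv) as [Hlow Hup].
  set (g := step_rhs eta N K f rn j) in *.
  destruct (Ranalysis5.IVT_interv (fun s => psi_loc eta K j u s v - g) rL rU) as [y [Hy Hroot]].
  - intros s Hs. apply continuity_pt_minus; [apply psi_loc_continuous; lra |].
    apply continuity_pt_const. now intros ? ?.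
  - exact HrLU.
  - lra.
  - lra.
  - exists y. split; [|lra].
    split; apply Rnot_le_lt; intros Hle; [assert (y = rL) | assert (y = rU)]; subst; lra.
Qed.

(* Equation k = -|j| is solved for r_k with the neighbours frozen at x; clamping them into
   [rL, rU] makes the local equation solvable for every x, and k = -|j| makes fixed points
   symmetric. *)
Definition jacobi (rn x : Z -> R) (j : Z) : R :=
  let k := (- Z.abs j)%Z in
  epsilon (inhabits 0) (fun y => rL < y < rU /\
    psi_loc eta K k (clamp rL rU (x (k - 1)%Z)) y (clamp rL rU (x (k + 1)%Z))
    = step_rhs eta N K f rn k).

Lemma jacobi_spec rn x j : in_cl rn -> (- N <= j <= N)%Z ->
  rL < jacobi rn x j < rU /\
  psi_loc eta K (- Z.abs j) (clamp rL rU (x (- Z.abs j - 1)%Z)) (jacobi rn x j)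
    (clamp rL rU (x (- Z.abs j + 1)%Z)) = step_rhs eta N K f rn (- Z.abs j).
Proof.
  intros Hr Hj. unfold jacobi; cbv zeta.
  apply epsilon_spec, local_solution; [easy | lia | apply clamp_in_Omega ..].
Qed.

Lemma jacobi_contraction rn x x' : in_cl rn ->
  dist_inf N (jacobi rn x) (jacobi rn x') <= 2 * e / (d - 5 * e) * dist_inf N x x'.
Proof.
  intros Hr. pose proof e_pos. pose proof d_gt_13e. pose proof (dist_inf_ge0 N x x').
  apply dist_inf_le; [apply Rmult_le_pos; [apply Rdiv_le_0_compat|]; lra|].
  intros j Hj. set (k := (- Z.abs j)%Z).
  destruct (jacobi_spec rn x j Hr Hj) as [Hy Hsol].
  destruct (jacobi_spec rn x' j Hr Hj) as [Hy' Hsol'].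
  fold k in Hsol, Hsol'.
  pose proof (psi_loc_sep K k
    (clamp rL rU (x (k - 1)%Z)) (jacobi rn x j) (clamp rL rU (x (k + 1)%Z))
    (clamp rL rU (x' (k - 1)%Z)) (jacobi rn x' j) (clamp rL rU (x' (k + 1)%Z))
    (clamp_in_Omega _) ltac:(lra) (clamp_in_Omega _)
    (clamp_in_Omega _) ltac:(lra) (clamp_in_Omega _)) as Hsep.
  rewrite Hsol, Hsol', Rminus_diag, Rabs_R0, Rplus_0_l in Hsep.
  pose proof (clamped_neighbours_dist x x' k ltac:(lia)) as Hnb.
  apply (Rmult_le_compat_l e) in Hnb; [|lra].
  pose proof (weights_bounds K k) as (Hwd & Hwp & Hwn & Hsum).
  pose proof (Rabs_pos (jacobi rn x j - jacobi rn x' j)).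
  set (Y := Rabs (jacobi rn x j - jacobi rn x' j)) in *.
  assert (Hrate : (d - 5 * e) * Y <= 2 * e * dist_inf N x x').
  { assert (0 <= (5 - 2 * wdbl K k - (wprev K k + wnext K k)) * (e * Y)) by (apply Rmult_le_pos; nra).
    assert (0 <= (2 - (wprev K k + wnext K k)) * (e * dist_inf N x x'))
      by (apply Rmult_le_pos; nra).
    lra. }
  apply (Rmult_le_reg_l (d - 5 * e)); [lra|].
  replace ((d - 5 * e) * (2 * e / (d - 5 * e) * dist_inf N x x')) with (2 * e * dist_inf N x x')
    by (field; lra).
  exact Hrate.
Qed.

Lemma gfc_step_exists rn : symmetric N rn -> in_cl rn ->
  exists x, symmetric N x /\ in_Omega N rL rU x /\ gfc_step eta N K f rn x.
Proof.
  intros Hsr Hr. pose proof e_pos. pose proof d_gt_13e.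
  destruct (contraction_fixed_point N (fun _ => True) (jacobi rn) (2 * e / (d - 5 * e)))
    with (x0 := fun _ : Z => rL) as [x [_ Hfix]]; try easy.
  - split; [apply Rdiv_le_0_compat; lra|].
    apply (Rmult_lt_reg_r (d - 5 * e)); [lra|]. field_simplify; lra.
  - intros y z _ _. now apply jacobi_contraction.
  - assert (Hin : in_Omega N rL rU x)
      by (intros j Hj; rewrite <- Hfix by easy; now apply jacobi_spec).
    assert (Hsx : symmetric N x).
    { intros j Hj. rewrite <- (Hfix j), <- (Hfix (- j)%Z) by lia.
      unfold jacobi. now rewrite Z.abs_opp. }
    exists x. split; [exact Hsx|]. split; [exact Hin|].
    apply (gfc_step_of_left_half eta N K HK HKN f Hf); [easy | easy |].
    intros j Hj. rewrite psiE_left_clamped by (easy || now apply in_Omega_cl).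
    destruct (jacobi_spec rn x j Hr ltac:(lia)) as [_ Hsol].
    replace (- Z.abs j)%Z with j in Hsol by lia. now rewrite (Hfix j) in Hsol by lia.
Qed.

Local Notation rate := (8 * Rabs (eta1 (2 * rL)) / (eta1 rU - 5 * Rabs (eta1 (2 * rL)))).

Lemma rate_bounds : 0 <= rate < 1.
Proof.
  pose proof e_pos. pose proof d_gt_13e. rewrite Rabs_left by lra. split.
  - apply Rdiv_le_0_compat; lra.
  - apply (Rmult_lt_reg_r (d - 5 * e)); [lra|]. field_simplify; lra.
Qed.

Lemma gfc_step_lipschitz rn sn rn1 sn1 : in_cl rn -> in_cl sn ->
  symmetric N rn1 -> in_cl rn1 -> gfc_step eta N K f rn rn1 ->
  symmetric N sn1 -> in_cl sn1 -> gfc_step eta N K f sn sn1 ->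
  dist_inf N rn1 sn1 <= rate * dist_inf N rn sn.
Proof.
  intros. pose proof e_pos. pose proof d_gt_13e. rewrite Rabs_left by lra.
  apply (Rmult_le_reg_l (d - 5 * e)); [lra|].
  replace ((d - 5 * e) * (8 * e / (d - 5 * e) * dist_inf N rn sn))
    with (8 * e * dist_inf N rn sn) by (field; lra).
  now apply gfc_step_sep.
Qed.

Lemma dist_inf_le_rate_self x y : dist_inf N x y <= rate * dist_inf N x y ->
  forall j, (- N <= j <= N)%Z -> x j = y j.
Proof.
  intros H. apply dist_inf_le0. pose proof rate_bounds. pose proof (dist_inf_ge0 N x y). nra.
Qed.

Lemma gfc_step_unique_solution rn : symmetric N rn -> in_Omega N rL rU rn ->
  exists rn1, symmetric N rn1 /\ in_Omega N rL rU rn1 /\ gfc_step eta N K f rn rn1 /\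
    (forall s, symmetric N s -> in_Omega N rL rU s -> gfc_step eta N K f rn s ->
       forall j, (- N <= j <= N)%Z -> s j = rn1 j).
Proof.
  intros Hs Ho. destruct (gfc_step_exists rn Hs (in_Omega_cl _ _ _ _ Ho)) as [x (Hsx & Hox & Hx)].
  exists x. split; [easy|]. split; [easy|]. split; [easy|].
  intros s Hss Hos Hstep. apply dist_inf_le0.
  rewrite <- (Rmult_0_r rate), <- (dist_inf_refl N rn).
  apply gfc_step_lipschitz; auto using in_Omega_cl.
Qed.

Definition step_map (rn : Z -> R) : Z -> R :=
  epsilon (inhabits (fun _ : Z => 0))
    (fun x => symmetric N x /\ in_Omega N rL rU x /\ gfc_step eta N K f rn x).

Lemma step_map_spec rn : symmetric N rn -> in_cl rn ->
  symmetric N (step_map rn) /\ in_Omega N rL rU (step_map rn) /\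
  gfc_step eta N K f rn (step_map rn).
Proof. intros Hs Hr. unfold step_map. apply epsilon_spec. now apply gfc_step_exists. Qed.

Lemma qcf_solution_exists : exists r, symmetric N r /\ in_Omega N rL rU r /\ qcf_eq eta N K f r.
Proof.
  destruct (contraction_fixed_point N (fun x => symmetric N x /\ in_cl x) step_map rate)
    with (x0 := fun _ : Z => (rL + rU) / 2) as [r [[Hsr Hr] Hfix]].
  - exact rate_bounds.
  - intros x [Hs Hx]. destruct (step_map_spec x Hs Hx) as (? & ? & _). auto using in_Omega_cl.
  - intros x y [Hsx Hx] [Hsy Hy].
    destruct (step_map_spec x Hsx Hx) as (? & ? & ?), (step_map_spec y Hsy Hy) as (? & ? & ?).
    apply gfc_step_lipschitz; auto using in_Omega_cl.
  - apply symmetric_in_cl_Omega_closed.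
  - split; [easy|]. intros j _. lra.
  - destruct (step_map_spec r Hsr Hr) as (_ & Ho & Hstep).
    exists r. split; [easy|]. split.
    + intros j Hj. rewrite <- Hfix by easy. now apply Ho.
    + apply qcf_eq_iff_gfc_fixed. now apply (gfc_step_ext eta N K HK HKN f r (step_map r)).
Qed.

Lemma qcf_solution_unique r s : symmetric N r -> in_Omega N rL rU r -> qcf_eq eta N K f r ->
  symmetric N s -> in_Omega N rL rU s -> qcf_eq eta N K f s ->
  forall j, (- N <= j <= N)%Z -> s j = r j.
Proof.
  intros Hsr Hor Hr Hss Hos Hs. apply dist_inf_le_rate_self.
  apply qcf_eq_iff_gfc_fixed in Hr, Hs. apply gfc_step_lipschitz; auto using in_Omega_cl.
Qed.

Lemma gfc_iterates_converge r (rs : nat -> Z -> R) :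
  symmetric N r -> in_Omega N rL rU r -> qcf_eq eta N K f r ->
  (forall n, symmetric N (rs n) /\ in_Omega N rL rU (rs n)) ->
  (forall n, gfc_step eta N K f (rs n) (rs (S n))) ->
  is_lim_seq (fun n => dist_inf N (rs n) r) 0.
Proof.
  intros Hsr Hor Hr Hrs Hstep. apply qcf_eq_iff_gfc_fixed in Hr.
  apply (is_lim_seq_contracting _ rate rate_bounds); [intros; apply dist_inf_ge0|].
  intros n. destruct (Hrs n), (Hrs (S n)).
  apply gfc_step_lipschitz; auto using in_Omega_cl.
Qed.

End Chain.
End Regime.

Theorem corollary5p2
  (phi eta eta1 eta2 : R -> R)
  (Hphi : forall r, 0 < r -> is_derive phi r (eta r))
  (Heta : forall r, 0 < r -> is_derive eta r (eta1 r))
  (Heta1 : forall r, 0 < r -> is_derive eta1 r (eta2 r))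
  (Heta2c : forall r, 0 < r -> continuous eta2 r)
  (a0 r1t r2t a1 : R)
  (Hconst : 0 < a0 /\ a0 < r1t /\ r1t < r2t /\ r2t < 2 * a0 /\ a0 < a1)
  (H1a : forall r, 0 < r < r1t -> eta1 r > 0)
  (H1b : forall r, r > r1t -> eta1 r < 0)
  (H2a : forall r, 0 < r < r2t -> eta2 r < 0)
  (H2b : forall r, r > r2t -> eta2 r > 0)
  (H3a : forall r, 0 < r < a0 -> etahat eta r < 0)
  (H3b : forall r, r > a0 -> etahat eta r > 0)
  (H4a : forall r, 0 < r < a1 -> Derive (etahat eta) r > 0)
  (H4b : forall r, r > a1 -> Derive (etahat eta) r < 0)
  (N K : Z) (HK : (2 <= K)%Z) (HKN : (K < N - 1)%Z)
  (f : Z -> R)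
  (Hf : forall j : Z, (0 <= j <= N)%Z -> f (j + 1)%Z = - f (- j)%Z)
  (rL rU : R)
  (HrL : r2t / 2 < rL) (HrLU : rL < rU)
  (Hder : eta1 rU + 13 * eta1 (2 * rL) > 0)
  (HPhi : forall j : Z, (- N <= j <= N)%Z ->
     eta rL + 4 * eta (2 * rL) - 2 * eta (2 * rU) < - zsum (- N) j f /\
     - zsum (- N) j f < eta rU + 4 * eta (2 * rU) - 2 * eta (2 * rL)) :
  let L := 8 * Rabs (eta1 (2 * rL)) / (eta1 rU - 5 * Rabs (eta1 (2 * rL))) in
  L < 1 /\
  (forall rn : Z -> R, symmetric N rn -> in_Omega N rL rU rn ->
     exists rn1 : Z -> R,
       symmetric N rn1 /\ in_Omega N rL rU rn1 /\ gfc_step eta N K f rn rn1 /\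
       (forall s : Z -> R, symmetric N s -> in_Omega N rL rU s ->
          gfc_step eta N K f rn s ->
          forall j : Z, (- N <= j <= N)%Z -> s j = rn1 j)) /\
  (forall rn sn rn1 sn1 : Z -> R,
     symmetric N rn -> in_Omega N rL rU rn ->
     symmetric N sn -> in_Omega N rL rU sn ->
     symmetric N rn1 -> in_Omega N rL rU rn1 -> gfc_step eta N K f rn rn1 ->
     symmetric N sn1 -> in_Omega N rL rU sn1 -> gfc_step eta N K f sn sn1 ->
     norm_inf N (fun j => rn1 j - sn1 j) <= L * norm_inf N (fun j => rn j - sn j)) /\
  (exists r : Z -> R,
     symmetric N r /\ in_Omega N rL rU r /\ qcf_eq eta N K f r /\
     (forall s : Z -> R, symmetric N s -> in_Omega N rL rU s -> qcf_eq eta N K f s ->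
        forall j : Z, (- N <= j <= N)%Z -> s j = r j) /\
     (forall rs : nat -> Z -> R,
        (forall n, symmetric N (rs n) /\ in_Omega N rL rU (rs n)) ->
        (forall n, gfc_step eta N K f (rs n) (rs (S n))) ->
        is_lim_seq (fun n => norm_inf N (fun j => rs n j - r j)) 0)).
Proof.
  intros L. subst L.
  destruct Hconst as (Ha0 & Ha0r1 & Hr12 & _). assert (Hr1 : 0 < r1t) by lra.
  split; [|split; [|split]].
  - exact (proj2 (rate_bounds eta1 r1t r2t rL rU Hr12 H1b HrL Hder)).
  - intros rn Hs Ho. eapply (gfc_step_unique_solution eta eta1 eta2 Heta Heta1 r1t r2t rL rU); eauto.
  - intros rn sn rn1 sn1 _ Hrn _ Hsn Hs1 Ho1 Hst1 Hs2 Ho2 Hst2.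
    eapply (gfc_step_lipschitz eta eta1 eta2 Heta Heta1 r1t r2t rL rU); eauto using in_Omega_cl.
  - destruct (qcf_solution_exists eta eta1 eta2 Heta Heta1 r1t r2t rL rU Hr1 Hr12 H1b H2a H2b
      HrL HrLU Hder N K HK HKN f Hf HPhi) as (r & Hsr & Hor & Hr).
    exists r. split; [easy|]. split; [easy|]. split; [easy|]. split.
    + intros s Hss Hos Hs. eapply (qcf_solution_unique eta eta1 eta2 Heta Heta1 r1t r2t rL rU); eauto.
    + intros rs Hrs Hstep. eapply (gfc_iterates_converge eta eta1 eta2 Heta Heta1 r1t r2t rL rU); eauto.
Qed.
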